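(* The morphism of algebraic patterns $\Xi^{\mathrm{op}}\colon\Theta^{\mathrm{op}}\to\Theta^{\mathrm{op}}$ is a strong Segal morphism: for every $T\in\Theta$ the induced functor $\Theta^{\mathrm{el}}_{/T}\to\Theta^{\mathrm{el}}_{/\Xi T}$ is final.
   Context: $\Theta$ is Joyal's cell category (strict $\omega$-categories free on globular sums); inert morphisms are those free on morphisms of $\omega$-graphs between globular sums, elementary objects are the globes $\mathbf D_n$, and $\Theta^{\mathrm{el}}_{/T}$ denotes the category of inert morphisms $E\to T$ in $\Theta$ with $E$ elementary. $\Xi$ is the suspension, with $\Xi\mathbf D_n=\mathbf D_{n+1}$. Every $T\in\Theta$ has a unique globular presentation $T\simeq\mathbf D_{n_1}\amalg_{\mathbf D_{m_1}}\cdots\amalg_{\mathbf D_{m_{p-1}}}\mathbf D_{n_p}$ with $m_i<n_i,n_{i+1}$, and the corresponding zigzag diagram is final in $\Theta^{\mathrm{el}}_{/T}$. *)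

From Stdlib Require Import ProofIrrelevance.
From mathcomp Require Import all_boot.

Set Implicit Arguments.
Unset Strict Implicit.
Unset Printing Implicit Defensive.

Lemma sig_eq (A : Type) (P : A -> Prop) (x y : sig P) :
  proj1_sig x = proj1_sig y -> x = y.
Proof.
case: x => a pa; case: y => b pb /= eab; subst b.
by rewrite (proof_irrelevance _ pa pb).
Qed.

Definition monob m n (f : {ffun 'I_m.+1 -> 'I_n.+1}) : bool :=
  [forall i : 'I_m.+1, forall j : 'I_m.+1, (i <= j) ==> (f i <= f j)].

Definition dmap m n := {f : {ffun 'I_m.+1 -> 'I_n.+1} | monob f}.

Lemma monobP m n (f : {ffun 'I_m.+1 -> 'I_n.+1}) :
  reflect (forall i j : 'I_m.+1, i <= j -> f i <= f j) (monob f).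
Proof.
apply: (iffP forallP) => [H i j lij | H i].
  by move/forallP: (H i) => /(_ j) /implyP; apply.
by apply/forallP => j; apply/implyP; exact: H.
Qed.

Lemma dmap_mono m n (f : dmap m n) (i j : 'I_m.+1) :
  i <= j -> proj1_sig f i <= proj1_sig f j.
Proof. by case: f => f /= /monobP; apply. Qed.
Arguments dmap_mono {m n} f {i j}.

Definition dcomp l m n (g : dmap m n) (f : dmap l m) : dmap l n.
Proof.
refine (exist _ [ffun i => proj1_sig g (proj1_sig f i)] _).
apply/monobP => i j lij; rewrite !ffunE.
have := dmap_mono f lij; exact: dmap_mono.
Defined.

Definition did n : dmap n n.
Proof. by refine (exist _ [ffun i => i] _); apply/monobP => i j; rewrite !ffunE. Defined.

Definition dconst n m (v : 'I_m.+1) : dmap n m.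
Proof. by refine (exist _ [ffun _ => v] _); apply/monobP => i j; rewrite !ffunE. Defined.

(* A simplicial set: a functor Delta^op -> Type (the laws are a separate
   predicate, imposed where needed). *)
Record sSet := SSet {
  sx : nat -> Type;
  sact : forall m n, dmap m n -> sx n -> sx m }.
Arguments sact _ {m n}.

Definition sSet_laws (X : sSet) : Prop :=
  (forall n (x : sx X n), sact X (did n) x = x) /\
  (forall l m n (g : dmap m n) (f : dmap l m) (x : sx X n),
      sact X (dcomp g f) x = sact X f (sact X g x)).

Definition smap (X Y : sSet) :=
  {phi : forall n, sx X n -> sx Y n |
     forall m n (f : dmap m n) (x : sx X n), phi m (sact X f x) = sact Y f (phi n x)}.

(* f : [m] -> [n] is a simplex of the horn Lambda^n_k *)
Definition in_horn n (k : 'I_n.+1) m (f : dmap m n) : bool :=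
  [exists j : 'I_n.+1, (j != k) && [forall i, proj1_sig f i != j]].

Definition kan (K : sSet) : Prop :=
  sSet_laws K /\
  forall n (k : 'I_n.+1), 0 < n ->
  forall h : (forall m (f : dmap m n), in_horn k f -> sx K m),
    (forall l m (g : dmap l m) (f : dmap m n) (p : in_horn k f)
            (p' : in_horn k (dcomp f g)),
        h l (dcomp f g) p' = sact K g (h m f p)) ->
    exists x : sx K n, forall m (f : dmap m n) (p : in_horn k f),
        h m f p = sact K f x.

(* simplicial homotopy X x Delta^1 -> K between two families of maps *)
Definition shtpy (X K : sSet) (phi psi : forall n, sx X n -> sx K n) : Prop :=
  exists H : (forall n, sx X n -> dmap n 1 -> sx K n),
    (forall m n (a : dmap m n) (x : sx X n) (u : dmap n 1),
        H m (sact X a x) (dcomp u a) = sact K a (H n x u)) /\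
    (forall n x, H n x (dconst n (ord0 : 'I_2)) = phi n x) /\
    (forall n x, H n x (dconst n (ord_max : 'I_2)) = psi n x).

(* X is weakly contractible (X -> * is a weak homotopy equivalence):
   X is nonempty and every map from X to a Kan complex K is homotopic to a
   constant map, i.e. [*, K] -> [X, K] is bijective for all Kan K. *)
Definition wcontr (X : sSet) : Prop :=
  inhabited (sx X 0) /\
  forall K : sSet, kan K -> forall phi : smap X K,
    exists v : sx K 0,
      shtpy (proj1_sig phi) (fun n _ => sact K (dconst n (ord0 : 'I_1)) v).

Record cat := Cat {
  ob : Type;
  hom : ob -> ob -> Type;
  idm : forall a, hom a a;
  cmp : forall a b c, hom b c -> hom a b -> hom a c;
  cmp1l : forall a b (f : hom a b), cmp (idm b) f = f;
  cmp1r : forall a b (f : hom a b), cmp f (idm a) = f;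
  cmpA : forall a b c d (h : hom c d) (g : hom b c) (f : hom a b),
      cmp h (cmp g f) = cmp (cmp h g) f }.
Arguments idm : clear implicits.
Arguments hom : clear implicits.
Arguments cmp c {a b c0} : rename.

Record functor (C D : cat) := Functor {
  fo : ob C -> ob D;
  fm : forall a b, hom C a b -> hom D (fo a) (fo b);
  fm1 : forall a, fm (idm C a) = idm D (fo a);
  fmM : forall a b c (g : hom C b c) (f : hom C a b),
      fm (cmp C g f) = cmp D (fm g) (fm f) }.
Arguments fo {C D} _ a.
Arguments fm {C D} _ {a b}.

Record nsimp (C : cat) (n : nat) := NSimp {
  nob : 'I_n.+1 -> ob C;
  nmor : forall i j : 'I_n.+1, i <= j -> hom C (nob i) (nob j);
  nmor1 : forall (i : 'I_n.+1) (h : i <= i), nmor h = idm C (nob i);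
  nmorM : forall i j k : 'I_n.+1, forall (hij : i <= j) (hjk : j <= k) (hik : i <= k),
      nmor hik = cmp C (nmor hjk) (nmor hij) }.

Definition nact (C : cat) m n (f : dmap m n) (x : nsimp C n) : nsimp C m :=
  @NSimp C m (fun i => nob x (proj1_sig f i))
    (fun i j h => nmor x (dmap_mono f h))
    (fun i h => nmor1 x (dmap_mono f h))
    (fun i j k hij hjk hik => nmorM x (dmap_mono f hij) (dmap_mono f hjk) (dmap_mono f hik)).

Definition nerve (C : cat) : sSet := @SSet (nsimp C) (@nact C).

(* the comma category d / F  (= C_{d/} := C x_D D_{d/}) *)
Section Comma.
Variables (C D : cat) (F : functor C D) (d : ob D).

Definition comma_ob := {c : ob C & hom D d (fo F c)}.
Definition comma_hom (x y : comma_ob) :=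
  {g : hom C (projT1 x) (projT1 y) | cmp D (fm F g) (projT2 x) = projT2 y}.

Definition comma_idm (x : comma_ob) : comma_hom x x.
Proof. by exists (idm C _); rewrite fm1 cmp1l. Defined.

Definition comma_cmp (x y z : comma_ob) (g : comma_hom y z) (f : comma_hom x y) :
  comma_hom x z.
Proof.
exists (cmp C (proj1_sig g) (proj1_sig f)).
by rewrite fmM -cmpA (proj2_sig f) (proj2_sig g).
Defined.

Lemma comma_cmp1l x y (f : comma_hom x y) : comma_cmp (comma_idm y) f = f.
Proof. by apply: sig_eq; rewrite /= cmp1l. Qed.
Lemma comma_cmp1r x y (f : comma_hom x y) : comma_cmp f (comma_idm x) = f.
Proof. by apply: sig_eq; rewrite /= cmp1r. Qed.
Lemma comma_cmpA x y z w (h : comma_hom z w) (g : comma_hom y z) (f : comma_hom x y) :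
  comma_cmp h (comma_cmp g f) = comma_cmp (comma_cmp h g) f.
Proof. by apply: sig_eq; rewrite /= cmpA. Qed.

Definition comma : cat :=
  @Cat comma_ob comma_hom comma_idm comma_cmp comma_cmp1l comma_cmp1r comma_cmpA.
End Comma.

(* (infinity-categorical) finality of a functor between 1-categories:
   all comma categories d / F are weakly contractible (Quillen's Theorem A
   criterion, Lurie HTT 4.1.3.1). *)
Definition final (C D : cat) (F : functor C D) : Prop :=
  forall d : ob D, wcontr (nerve (comma F d)).

(* A tree Node [:: t_1; ...; t_r] encodes the globular sum obtained by
   gluing the suspensions Xi t_1, ..., Xi t_r end to end along 0-cells. *)
Inductive tree := Node of seq tree.

Definition children (t : tree) : seq tree := let: Node ts := t in ts.

(* Cells of (the omega-graph underlying) a globular sum: a k-cell is a list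
   [:: i_1; ...; i_k; j] (i_1 selects a child of the root, i_2 a child of
   that child, ...; j selects a 0-cell, i.e. a vertex, of the last tree). *)
Fixpoint is_cell (c : seq nat) (t : tree) : bool :=
  match c with
  | [::] => false
  | [:: j] => j <= size (children t)
  | i :: c' => (i < size (children t)) && is_cell c' (nth (Node [::]) (children t) i)
  end.

(* the m-dimensional source (b = false) / target (b = true) of a cell d *)
Definition bnd (b : bool) (m : nat) (d : seq nat) : seq nat :=
  rcons (take m d) (nth 0 d m + b).

(* morphisms of globes D_m -> D_n in the inert part of Theta:
   identity, or (for m < n) the inclusion of the m-source / m-target *)
Inductive glab := GId | GSrc | GTgt.

Definition valid (g : glab) (c d : seq nat) : bool :=
  match g with
  | GId => c == d
  | GSrc => (size c < size d) && (c == bnd false (size c).-1 d)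
  | GTgt => (size c < size d) && (c == bnd true (size c).-1 d)
  end.

Definition glab_cmp (g f : glab) : glab :=
  match f with GId => g | _ => f end.

Lemma bnd_bnd b b' m n d : m < n -> n < size d ->
  bnd b' m (bnd b n d) = bnd b' m d.
Proof.
move=> mn nd; rewrite /bnd; congr rcons.
  rewrite -cats1 takel_cat; last by rewrite size_take nd ltnW.
  by rewrite take_takel // ltnW.
by rewrite nth_rcons size_take nd mn nth_take.
Qed.

Lemma size_bnd b m d : size (bnd b m d) = (minn m (size d)).+1.
Proof. by rewrite /bnd size_rcons size_take_min. Qed.


Lemma bnd_trans b b' x y z :
  size x < size y -> x = bnd b' (size x).-1 y ->
  size y < size z -> y = bnd b (size y).-1 z ->
  x = bnd b' (size x).-1 z.
Proof.
move=> sxy ex syz ey.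
have px : 0 < size x by rewrite ex size_bnd.
have py : 0 < size y by rewrite ey size_bnd.
rewrite {1}ex {1}ey bnd_bnd //.
  by rewrite -ltnS !prednK.
by rewrite -ltnS prednK // ltnW.
Qed.

Lemma valid_cmp (g f : glab) (x y z : seq nat) :
  valid f x y -> valid g y z -> valid (glab_cmp g f) x z.
Proof.
case: f => /=; first by move/eqP->.
all: case/andP=> sxy /eqP ex; case: g => /=; first by move/eqP<-; rewrite sxy; apply/eqP.
all: case/andP=> syz /eqP ey; rewrite (ltn_trans sxy syz) /=; apply/eqP.
all: exact: bnd_trans ey.
Qed.

(* Theta^el_{/T}: objects are the inert morphisms D_n -> T, i.e. the
   n-cells of the omega-graph underlying T; morphisms (from c to d) are the
   inert morphisms of globes D_{dim c} -> D_{dim d} over T. *)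
Section ThetaEl.
Variable T : tree.

Definition el_ob := {c : seq nat | is_cell c T}.
Definition el_hom (x y : el_ob) := {g : glab | valid g (proj1_sig x) (proj1_sig y)}.

Definition el_idm (x : el_ob) : el_hom x x := exist _ GId (eqxx _).

Definition el_cmp (x y z : el_ob) (g : el_hom y z) (f : el_hom x y) : el_hom x z :=
  exist _ (glab_cmp (proj1_sig g) (proj1_sig f))
    (valid_cmp (proj2_sig f) (proj2_sig g)).

Lemma el_cmp1l x y (f : el_hom x y) : el_cmp (el_idm y) f = f.
Proof. by apply: sig_eq; case: f => -[]. Qed.
Lemma el_cmp1r x y (f : el_hom x y) : el_cmp f (el_idm x) = f.
Proof. by apply: sig_eq. Qed.
Lemma el_cmpA x y z w (h : el_hom z w) (g : el_hom y z) (f : el_hom x y) :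
  el_cmp h (el_cmp g f) = el_cmp (el_cmp h g) f.
Proof. by apply: sig_eq; case: f => -[]; case: g => -[]. Qed.

Definition theta_el : cat :=
  @Cat el_ob el_hom el_idm el_cmp el_cmp1l el_cmp1r el_cmpA.
End ThetaEl.

Definition susp (T : tree) : tree := Node [:: T].

(* Xi on cells: a cell c of T (an inert map D_n -> T) goes to the cell
   0 :: c of Xi T (the inert map Xi D_n = D_{n+1} -> Xi T). *)
Lemma is_cell_susp T c : is_cell c T -> is_cell (0 :: c) (susp T).
Proof. by case: c. Qed.

Lemma bnd_cons b k y : bnd b k.+1 (0 :: y) = 0 :: bnd b k y.
Proof. by []. Qed.

Lemma valid_susp g c d : valid g c d -> valid g (0 :: c) (0 :: d).
Proof.
case: g => /=; first by move/eqP->.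
all: case/andP=> scd /eqP ec; rewrite ltnS scd /=.
all: have pc : 0 < size c by rewrite ec size_bnd.
all: by rewrite -[size c](prednK pc) bnd_cons -(prednK pc) -ec.
Qed.

Section Xi.
Variable T : tree.

Definition xi_fo (x : ob (theta_el T)) : ob (theta_el (susp T)) :=
  exist _ (0 :: proj1_sig x) (is_cell_susp (proj2_sig x)).

Definition xi_fm (x y : ob (theta_el T)) (g : hom (theta_el T) x y) :
  hom (theta_el (susp T)) (xi_fo x) (xi_fo y) :=
  exist _ (proj1_sig g) (valid_susp (proj2_sig g)).

Lemma xi_fm1 x : xi_fm (idm (theta_el T) x) = idm (theta_el (susp T)) (xi_fo x).
Proof. by apply: sig_eq. Qed.
Lemma xi_fmM x y z (g : hom (theta_el T) y z) (f : hom (theta_el T) x y) :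
  xi_fm (cmp (theta_el T) g f) = cmp (theta_el (susp T)) (xi_fm g) (xi_fm f).
Proof. by apply: sig_eq. Qed.

Definition xi_el : functor (theta_el T) (theta_el (susp T)) :=
  @Functor _ _ xi_fo xi_fm xi_fm1 xi_fmM.
End Xi.

(* The comma category d / Xi is a poset: its objects are the cells c of T such that
   d is a face of 0 :: c in Xi T, and there is at most one inert map between two globes
   over a globular sum.  If d is one of the two vertices of Xi T this is the whole face
   poset of T; otherwise d = 0 :: c0 and it is the set of faces above c0, whose least
   element is c0.  Both posets are dismantlable: the second one trivially, the first one
   by removing its cells one at a time, each being a beat point dominated by a single
   earlier cell.  A finite dismantlable poset has a weakly contractible nerve: putting a
   beat point x dominated by m back into the cone over the poset only adds simplices that
   pair off as U :\ m and U, so it amounts to a sequence of horn fillings.  Hence every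
   map from the nerve to a Kan complex extends over the cone, and the cone is a homotopy
   to a constant map. *)

From Pilot Require Import Defs.
From mathcomp Require Import all_boot all_order.
From Stdlib Require Import ProofIrrelevance FunctionalExtensionality ClassicalEpsilon.

Set Implicit Arguments.
Unset Strict Implicit.
Unset Printing Implicit Defensive.

Section NerveOfRelation.
Variables (B : finType) (le : rel B).

Definition monotoneb n (s : {ffun 'I_n.+1 -> B}) : bool :=
  [forall i : 'I_n.+1, forall j : 'I_n.+1, (i <= j) ==> le (s i) (s j)].

Definition nerve_simplex n := {s : {ffun 'I_n.+1 -> B} | monotoneb s}.

Lemma monotonebP n (s : {ffun 'I_n.+1 -> B}) :
  reflect (forall i j : 'I_n.+1, i <= j -> le (s i) (s j)) (monotoneb s).
Proof.
apply: (iffP forallP) => [H i j lij | H i].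
  by move/forallP: (H i) => /(_ j) /implyP; apply.
by apply/forallP => j; apply/implyP; exact: H.
Qed.

Lemma nerve_simplex_mono n (s : nerve_simplex n) (i j : 'I_n.+1) :
  i <= j -> le (sval s i) (sval s j).
Proof. by case: s => s /= /monotonebP; apply. Qed.

Lemma nerve_simplex_eq n (s s' : nerve_simplex n) : sval s =1 sval s' -> s = s'.
Proof. by move=> eq_ss'; apply: sig_eq; apply/ffunP. Qed.

Definition simplex_act m n (f : dmap m n) (s : nerve_simplex n) : nerve_simplex m.
Proof.
refine (exist _ [ffun i => sval s (sval f i)] _).
apply/monotonebP => i j lij; rewrite !ffunE.
exact/nerve_simplex_mono/dmap_mono.
Defined.

Lemma simplex_act_comp l m n (g : dmap m n) (f : dmap l m) (s : nerve_simplex n) :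
  simplex_act (dcomp g f) s = simplex_act f (simplex_act g s).
Proof. by apply: nerve_simplex_eq => i; rewrite /= !ffunE. Qed.

Definition vertex_set n (s : nerve_simplex n) : {set B} := [set sval s i | i : 'I_n.+1].

Lemma vertex_set_act m n (f : dmap m n) (s : nerve_simplex n) :
  vertex_set (simplex_act f s) \subset vertex_set s.
Proof.
apply/subsetP => _ /imsetP [i _ ->]; rewrite /= ffunE.
exact: imset_f.
Qed.

Definition chainb (U : {set B}) : bool :=
  [forall a in U, forall b in U, le a b || le b a].

Lemma chainbP (U : {set B}) : reflect {in U &, total le} (chainb U).
Proof.
apply: (iffP forallP) => [H a b aU bU | H a].
  by move/implyP: (H a) => /(_ aU) /forallP /(_ b) /implyP /(_ bU).
by apply/implyP => aU; apply/forallP => b; apply/implyP => bU; apply: H.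
Qed.

Lemma chainbS (U V : {set B}) : U \subset V -> chainb V -> chainb U.
Proof.
by move=> /subsetP UV /chainbP tV; apply/chainbP => a b aU bU; apply: tV; apply: UV.
Qed.

Lemma chainbU1 (U : {set B}) x :
  chainb U -> (forall y, y \in U -> le x y || le y x) -> le x x -> chainb (x |: U).
Proof.
move=> /chainbP tU xU lexx; apply/chainbP => a b; rewrite !in_setU1.
case/orP => [/eqP -> | aU]; case/orP => [/eqP -> | bU].
- by rewrite lexx.
- exact: xU.
- by rewrite orbC xU.
- exact: tU.
Qed.

Lemma chainb_vertex_set n (s : nerve_simplex n) : chainb (vertex_set s).
Proof.
apply/chainbP => _ _ /imsetP [i _ ->] /imsetP [j _ ->].
case: (leqP i j) => [ij | /ltnW ji]; first by rewrite (nerve_simplex_mono s ij).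
by rewrite (nerve_simplex_mono s ji) orbT.
Qed.

Definition down_closed (G : pred {set B}) : Prop :=
  forall U V : {set B}, U \subset V -> G V -> G U.

Definition order_complex (X : {set B}) : pred {set B} :=
  fun U => chainb U && (U \subset X).

Lemma order_complex0 X : order_complex X set0.
Proof. by rewrite /order_complex sub0set andbT; apply/chainbP => a b; rewrite in_set0. Qed.

Lemma order_complex_down_closed X : down_closed (order_complex X).
Proof.
move=> U V UV /andP [tV VX].
by rewrite /order_complex (chainbS UV tV) (subset_trans UV VX).
Qed.

Lemma order_complexS (X Y : {set B}) :
  X \subset Y -> forall U, order_complex X U -> order_complex Y U.
Proof. by move=> XY U /andP [tU UX]; rewrite /order_complex tU (subset_trans UX XY). Qed.

End NerveOfRelation.

Section Dismantlability.
Variables (B : finType) (le : rel B) (top : B).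
Implicit Types S : {set B}.

Definition beaten S (x m : B) : bool :=
  (le m x && [forall y in S, le y x ==> le y m]) ||
  (le x m && [forall y in S, le x y ==> le m y]).

Inductive dismantlable : {set B} -> Prop :=
| dismantlable1 p : p != top -> dismantlable [set p]
| dismantlableU1 S x m : dismantlable S -> x \notin S -> x != top -> m \in S ->
    beaten S x m -> dismantlable (x |: S).

Lemma dismantlable_neq0 S : dismantlable S -> exists b, b \in S.
Proof. by case=> [p _ | {}S x *]; [exists p; rewrite set11 | exists x; rewrite setU11]. Qed.

Lemma dismantlableD1 S x m : x \in S -> top \notin S -> dismantlable (S :\ x) ->
  m \in S :\ x -> beaten (S :\ x) x m -> dismantlable S.
Proof.
move=> xS topS dismSx mSx x_beaten; rewrite -(setD1K xS).
by apply: dismantlableU1 x_beaten => //; [rewrite setD11 | apply: contraNneq topS => <-].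
Qed.

Section ByRank.
Import Order.TTheory.
Context {disp : Order.disp_t} {R : orderType disp}.
Variables (rank : B -> R) (p : B -> B) (x0 : B).

Definition beaten_by_rank (S : {set B}) : Prop :=
  forall x, x \in S -> x != x0 ->
    [/\ p x \in S, (rank (p x) < rank x)%O & beaten [set y in S | (rank y < rank x)%O] x (p x)].

Lemma rank_x0_min S : x0 \in S -> {in S &, injective rank} -> beaten_by_rank S ->
  forall y, y \in S -> y != x0 -> (rank x0 < rank y)%O.
Proof.
move=> x0S rank_inj S_beaten.
have [z zS z_min] := arg_minP rank x0S.
have z_x0 : z = x0.
  apply/eqP; apply: contraT => z_x0; have [pzS pz_lt _] := S_beaten z zS z_x0.
  by move: (z_min _ pzS); rewrite leNgt pz_lt.
move=> y yS y_x0; rewrite lt_neqAle -z_x0 z_min // andbT z_x0.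
by apply: contra y_x0 => /eqP /rank_inj -> //; rewrite -z_x0.
Qed.

Lemma dismantlable_rank S : x0 \in S -> top \notin S -> {in S &, injective rank} ->
  beaten_by_rank S -> dismantlable S.
Proof.
have [k] := ubnP #|S|; elim: k S => // k IH S /ltnSE cardS x0S topS rank_inj S_beaten.
have [-> | S_x0] := eqVneq S [set x0].
  by apply: dismantlable1; apply: contraNneq topS => <-.
have [y yS y_x0] : exists2 y, y \in S & y != x0.
  apply/exists_inP; apply: contraR S_x0 => /exists_inPn S_x0.
  by rewrite eqEsubset sub1set x0S andbT; apply/subsetP => y /S_x0; rewrite negbK inE.
have [x xS x_max] := arg_maxP rank x0S.
have {}xS : x \in S := xS.
have {}x_max z : z \in S -> (rank z <= rank x)%O := x_max z.
have x_x0 : x != x0.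
  apply: contraTneq (rank_x0_min x0S rank_inj S_beaten yS y_x0) => <-.
  by rewrite -leNgt x_max.
have below_x z : z \in S -> z != x -> (rank z < rank x)%O.
  move=> zS z_x; rewrite lt_neqAle x_max // andbT.
  by apply: contra z_x => /eqP /rank_inj ->.
have S'E : S :\ x = [set z in S | (rank z < rank x)%O].
  apply/setP => z; rewrite !inE; case: (eqVneq z x) => [-> | z_x]; first by rewrite ltxx andbF.
  by case: (boolP (z \in S)) => //= zS; rewrite below_x.
have [pxS px_lt px_beats] := S_beaten x xS x_x0.
apply: (dismantlableD1 (m := p x) xS topS).
- apply: IH => [||||z].
  + by apply: leq_trans cardS; rewrite [#|S|](cardsD1 x) xS.
  + by rewrite in_setD1 eq_sym x_x0.
  + by apply: contra topS => /setD1P [].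
  + by move=> a b /setD1P [_ aS] /setD1P [_ bS]; apply: rank_inj.
  rewrite in_setD1 => /andP [z_x zS] z_x0; have [pzS pz_lt pz_beats] := S_beaten z zS z_x0.
  have earlierE : [set u in S :\ x | (rank u < rank z)%O] = [set u in S | (rank u < rank z)%O].
    apply/setP => u; rewrite !inE; case: (eqVneq u x) => // ->.
    by rewrite xS ltNge x_max.
  split => //; last by rewrite earlierE.
  by rewrite in_setD1 pzS andbT; apply: contraTneq pz_lt => ->; rewrite ltNge x_max.
- by rewrite in_setD1 pxS andbT; apply: contraTneq px_lt => ->; rewrite ltxx.
- by rewrite S'E.
Qed.

End ByRank.

Hypotheses (le_refl : reflexive le) (le_trans : transitive le) (le_anti : antisymmetric le).

Lemma dismantlable_bottom b S : b \in S -> top \notin S -> {in S, forall y, le b y} ->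
  dismantlable S.
Proof.
have [k] := ubnP #|S|; elim: k S => // k IH S /ltnSE cardS bS topS b_bot.
have [-> | S_b] := eqVneq S [set b].
  by apply: dismantlable1; apply: contraNneq topS => <-.
have [y ySb] : exists y, y \in S :\ b.
  apply/set0Pn; apply: contra S_b => /eqP Sb0.
  by rewrite -(setD1K bS) Sb0 setU0.
pose down x := #|[set z in S | le z x]|.
have [x /setD1P [x_b xS] x_min] := arg_minnP down ySb.
have x_minimal z : z \in S -> z != b -> le z x -> z = x.
  move=> zS z_b zx; apply: le_anti; rewrite zx /=; apply: contraT => xz.
  have : down z < down x.
    apply: proper_card; rewrite properE; apply/andP; split.
      by apply/subsetP => u; rewrite !inE => /andP [-> uz]; exact: le_trans uz zx.
    by apply/subsetPn; exists x; rewrite !inE ?xS ?le_refl // xz andbF.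
  by rewrite ltnNge x_min //; apply/setD1P.
apply: (dismantlableD1 (m := b) xS topS).
- apply: IH => //.
  + by apply: leq_trans cardS; rewrite [#|S|](cardsD1 x) xS.
  + by rewrite in_setD1 bS andbT eq_sym.
  + by apply: contra topS => /setD1P [].
  + by move=> u /setD1P [_ /b_bot].
- by rewrite in_setD1 bS andbT eq_sym.
apply/orP; left; rewrite b_bot //=; apply/forall_inP => z /setD1P [z_x zS].
apply/implyP => zx; have [-> | z_b] := eqVneq z b; first exact: le_refl.
by move: z_x; rewrite (x_minimal z zS z_b zx) eqxx.
Qed.

End Dismantlability.

Section MapsToKanComplex.
Variables (B : finType) (le : rel B) (K : sSet).
Implicit Types (G : pred {set B}) (psi : forall n, nerve_simplex le n -> sx K n).

(* Maps out of the subcomplex of simplices whose vertex set satisfies [G] are encoded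
   by families defined on all simplices; only their values on the subcomplex matter. *)
Definition simplicial_on G psi :=
  forall m n (f : dmap m n) (s : nerve_simplex le n), G (vertex_set s) ->
    psi m (simplex_act f s) = sact K f (psi n s).

Definition agree_on G psi psi' :=
  forall n (s : nerve_simplex le n), G (vertex_set s) -> psi n s = psi' n s.

Definition extendable G0 G1 : Prop :=
  forall psi, simplicial_on G0 psi ->
    exists2 psi', simplicial_on G1 psi' & agree_on G0 psi psi'.

Lemma extendable_refl G : extendable G G.
Proof. by move=> psi psiG; exists psi. Qed.

Lemma extendable_trans G0 G1 G2 : (forall U, G0 U -> G1 U) ->
  extendable G0 G1 -> extendable G1 G2 -> extendable G0 G2.
Proof.
move=> G01 ext01 ext12 psi psiG0.
have [psi1 psi1G1 agree1] := ext01 psi psiG0.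
have [psi2 psi2G2 agree2] := ext12 psi1 psi1G1.
by exists psi2 => // n s sG0; rewrite agree1 // agree2 // G01.
Qed.

Lemma eq_extendable G0 G1 G1' :
  G1 =1 G1' -> extendable G0 G1 -> extendable G0 G1'.
Proof.
move=> eqG1 ext01 psi psiG0; have [psi' psi'G1 agree'] := ext01 psi psiG0.
by exists psi' => // m n f s; rewrite -eqG1; apply: psi'G1.
Qed.

Lemma simplicial_onS G G' psi :
  (forall U, G U -> G' U) -> simplicial_on G' psi -> simplicial_on G psi.
Proof. by move=> GG' psiG' m n f s /GG'; apply: psiG'. Qed.

Lemma simplicial_on_glue GA GB psiA psiB :
  down_closed GA -> down_closed GB ->
  simplicial_on GA psiA -> simplicial_on GB psiB ->
  agree_on (predI GA GB) psiA psiB ->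
  simplicial_on (predU GA GB)
    (fun n s => if GA (vertex_set s) then psiA n s else psiB n s).
Proof.
move=> GAd GBd psiAs psiBs agreeAB m n f s /= sAB.
have GA_f := GAd _ _ (vertex_set_act f s); have GB_f := GBd _ _ (vertex_set_act f s).
case sA: (GA (vertex_set s)); first by rewrite GA_f // psiAs.
have sB : GB (vertex_set s) by move: sAB; rewrite sA.
case fA: (GA (vertex_set (simplex_act f s))); last exact: psiBs.
by rewrite agreeAB /= ?fA ?GB_f // psiBs.
Qed.

Hypotheses (le_refl : reflexive le) (le_trans : transitive le) (le_anti : antisymmetric le).
Hypothesis K_kan : kan K.

Section HornFilling.
Variables (G : pred {set B}) (V : {set B}) (w : B).
Hypotheses (G_down : down_closed G) (V_chain : chainb le V) (wV : w \in V)
  (V_gt1 : 1 < #|V|) (G_faces : forall v, v \in V -> v != w -> G (V :\ v))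
  (G_missing : ~~ G (V :\ w)).

Let sortedV := sort le (enum V).
Let n := #|V|.-1.

Lemma size_sortedV : size sortedV = n.+1.
Proof. by rewrite size_sort -cardE /n prednK // ltnW. Qed.

Lemma mem_sortedV x : (x \in sortedV) = (x \in V).
Proof. by rewrite mem_sort mem_enum. Qed.

Lemma sortedV_mono a b : a <= b -> b < n.+1 -> le (nth w sortedV a) (nth w sortedV b).
Proof.
move=> ab bn; have sorted_sortedV : sorted le sortedV.
  apply: (@sort_sorted_in _ (mem V)); first exact/chainbP.
  by apply/allP => x; rewrite mem_enum.
apply: (sorted_leq_nth le_trans le_refl w sorted_sortedV) => //.
  by rewrite inE size_sortedV (leq_ltn_trans ab).
by rewrite inE size_sortedV.
Qed.

Definition V_simplex : nerve_simplex le n.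
Proof.
refine (exist _ [ffun i : 'I_n.+1 => nth w sortedV i] _).
by apply/monotonebP => i j ij; rewrite !ffunE; apply: sortedV_mono.
Defined.

Lemma V_simplex_inj : injective (sval V_simplex).
Proof.
move=> i j; rewrite /= !ffunE => /eqP.
by rewrite nth_uniq ?size_sortedV ?sort_uniq ?enum_uniq // => /eqP /val_inj.
Qed.

Lemma vertex_set_V_simplex : vertex_set V_simplex = V.
Proof.
apply/setP => x; apply/imsetP/idP => [[i _ ->] | xV].
  by rewrite /= ffunE -mem_sortedV mem_nth // size_sortedV.
have ix : index x sortedV < n.+1 by rewrite -size_sortedV index_mem mem_sortedV.
by exists (Ordinal ix) => //=; rewrite ffunE nth_index // mem_sortedV.
Qed.

Lemma V_simplex_in i : sval V_simplex i \in V.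
Proof. by rewrite -vertex_set_V_simplex imset_f. Qed.

Definition w_index : 'I_n.+1 := inord (index w sortedV).

Lemma V_simplex_w : sval V_simplex w_index = w.
Proof.
by rewrite /= ffunE inordK ?nth_index ?mem_sortedV // -size_sortedV index_mem mem_sortedV.
Qed.

Lemma in_horn_V_simplex m (f : dmap m n) :
  in_horn w_index f = G (vertex_set (simplex_act f V_simplex)).
Proof.
have V_simplexE j : (sval V_simplex j == w) = (j == w_index).
  by rewrite -V_simplex_w (inj_eq V_simplex_inj).
apply/idP/idP => [/existsP [j /andP [j_w /forallP f_j]] | G_f].
  apply: G_down (G_faces (V_simplex_in j) _); last by rewrite V_simplexE.
  apply/subsetP => _ /imsetP [i _ ->]; rewrite /= ffunE in_setD1 V_simplex_in andbT.
  by rewrite (inj_eq V_simplex_inj) f_j.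
apply: contraNT G_missing => /existsPn f_onto; apply: G_down G_f.
apply/subsetP => x /setD1P [x_w xV]; move: xV x_w.
rewrite -vertex_set_V_simplex => /imsetP [j _ ->]; rewrite V_simplexE => j_w.
move: (f_onto j); rewrite j_w /= => /forallPn [i /negPn /eqP <-].
by apply/imsetP; exists i => //=; rewrite !ffunE.
Qed.

Let coord m (s : nerve_simplex le m) : {ffun 'I_m.+1 -> 'I_n.+1} :=
  [ffun i => inord (index (sval s i) sortedV)].

Lemma nth_coord m (s : nerve_simplex le m) i :
  vertex_set s \subset V -> nth w sortedV (coord s i) = sval s i.
Proof.
move=> /subsetP sV_sub; have siV : sval s i \in V by apply/sV_sub/imset_f.
by rewrite ffunE inordK ?nth_index ?mem_sortedV // -size_sortedV index_mem mem_sortedV.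
Qed.

Lemma coord_mono m (s : nerve_simplex le m) : vertex_set s \subset V -> monob (coord s).
Proof.
move=> sV_sub; apply/monobP => i j ij; rewrite leqNgt; apply/negP => ji.
have e : sval s i = sval s j.
  apply: le_anti; rewrite nerve_simplex_mono //= -(nth_coord j sV_sub).
  by rewrite -(nth_coord i sV_sub) sortedV_mono // ltnW.
by move: ji; rewrite !ffunE e ltnn.
Qed.

Definition V_coord m (s : nerve_simplex le m) : dmap m n := insubd (dconst m ord0) (coord s).

Lemma V_coordE m (s : nerve_simplex le m) :
  vertex_set s \subset V -> sval (V_coord s) = coord s.
Proof. by move=> sV_sub; rewrite /V_coord insubdK //; exact: coord_mono. Qed.

Lemma V_coordK m (s : nerve_simplex le m) :
  vertex_set s \subset V -> simplex_act (V_coord s) V_simplex = s.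
Proof.
move=> sV_sub; apply: nerve_simplex_eq => i.
by rewrite /= !ffunE V_coordE // nth_coord.
Qed.

Lemma V_coord_act l m (f : dmap l m) (s : nerve_simplex le m) :
  vertex_set s \subset V -> V_coord (simplex_act f s) = dcomp (V_coord s) f.
Proof.
move=> sV_sub; have fsV_sub := subset_trans (vertex_set_act f s) sV_sub.
by apply: sig_eq; rewrite /= !V_coordE //; apply/ffunP => i; rewrite !ffunE.
Qed.

Lemma extendable_horn : extendable G (fun U => G U || (U \subset V)).
Proof.
move=> psi psiG; have [[_ K_comp] K_fill] := K_kan.
have n_gt0 : 0 < n by rewrite /n -ltnS prednK // ltnW.
pose h m (f : dmap m n) (_ : in_horn w_index f) := psi m (simplex_act f V_simplex).
have [x fill_x] : exists x, forall m (f : dmap m n) (p : in_horn w_index f),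
    h m f p = sact K f x.
  apply: K_fill => // l m g f p p'.
  by rewrite /h simplex_act_comp psiG // -in_horn_V_simplex.
pose psi' m s := if G (vertex_set s) then psi m s else sact K (V_coord s) x.
have psi'_V m s : vertex_set s \subset V -> psi' m s = sact K (V_coord s) x.
  move=> sV_sub; rewrite /psi'; case: ifP => // Gs.
  have hs : in_horn w_index (V_coord s) by rewrite in_horn_V_simplex V_coordK.
  by rewrite -(fill_x _ _ hs) /h V_coordK.
exists psi' => [l m f s /orP [Gs | sV_sub] | m s Gs]; last by rewrite /psi' Gs.
  by rewrite /psi' Gs (G_down (vertex_set_act f s) Gs) psiG.
by rewrite !psi'_V ?V_coord_act ?K_comp // (subset_trans (vertex_set_act f s)).
Qed.

End HornFilling.

Section Matching.
Variables (G0 G1 : pred {set B}) (m : B).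
Hypotheses (G0_down : down_closed G0) (G1_down : down_closed G1) (G01 : forall U, G0 U -> G1 U)
  (G0_set0 : G0 set0) (G1_chain : forall U, G1 U -> chainb le U)
  (G1_addm : forall U, G1 U -> ~~ G0 U -> m \notin U -> G1 (m |: U))
  (G0_delm : forall U, G1 U -> ~~ G0 U -> m \in U -> ~~ G0 (U :\ m)).

(* The simplices of G1 missing from G0 are matched as [U :\ m] with [U]; adding the
   larger members [U] of the pairs by increasing size, each step fills one horn. *)
Definition upper (U : {set B}) : bool := [&& G1 U, ~~ G0 U & m \in U].

Let uppers := sort (fun U V : {set B} => #|U| <= #|V|) (enum [set U | upper U]).

Let stage j (U : {set B}) := G0 U || has (fun V : {set B} => U \subset V) (take j uppers).

Lemma mem_uppers U : (U \in uppers) = upper U.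
Proof. by rewrite mem_sort mem_enum inE. Qed.

Lemma upper_nth j : j < size uppers -> upper (nth set0 uppers j).
Proof. by move=> j_lt; rewrite -mem_uppers mem_nth. Qed.

Lemma card_uppers_mono i j : i <= j -> j < size uppers ->
  #|nth set0 uppers i| <= #|nth set0 uppers j|.
Proof.
move=> ij j_lt; pose card_le (U V : {set B}) := #|U| <= #|V|.
have card_le_trans : transitive card_le by move=> V U W; apply: leq_trans.
apply: (sorted_leq_nth card_le_trans (fun U => leqnn _)) => //.
- by apply: sort_sorted => U V; apply: leq_total.
- by rewrite inE (leq_ltn_trans ij).
Qed.

Lemma stage_down_closed j : down_closed (stage j).
Proof.
move=> U V UV /orP [G0V | /hasP [W W_in VW]]; first by rewrite /stage (G0_down UV G0V).
by apply/orP; right; apply/hasP; exists W => //; apply: subset_trans VW.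
Qed.

Lemma stage_faces j v : j < size uppers ->
  v \in nth set0 uppers j -> v != m -> stage j (nth set0 uppers j :\ v).
Proof.
move=> j_lt; have /and3P [G1V _ mV] := upper_nth j_lt.
set V := nth set0 uppers j in G1V mV * => vV v_m.
have G1W : G1 (V :\ v) by apply: G1_down G1V; apply: subsetDl.
case G0W: (G0 (V :\ v)); first by rewrite /stage G0W.
have W_in : V :\ v \in uppers by rewrite mem_uppers /upper G1W G0W in_setD1 eq_sym v_m mV.
have W_lt : index (V :\ v) uppers < j.
  rewrite ltnNge; apply/negP => j_le.
  have := card_uppers_mono j_le; rewrite index_mem W_in nth_index // -/V.
  by rewrite (cardsD1 v V) vV add1n ltnn => /(_ isT).
apply/orP; right; apply/hasP; exists (V :\ v) => //.
by rewrite -(nth_index set0 W_in) -(nth_take set0 W_lt) mem_nth // size_takel // ltnW.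
Qed.

Lemma stage_missing j : j < size uppers -> ~~ stage j (nth set0 uppers j :\ m).
Proof.
move=> j_lt; have /and3P [G1V G0V mV] := upper_nth j_lt.
set V := nth set0 uppers j in G1V G0V mV *.
rewrite /stage negb_or G0_delm //; apply/hasPn => W W_in; apply/negP => VmW.
have /(nthP set0) [i] := W_in; rewrite size_takel => [i_lt|]; last exact: ltnW.
rewrite nth_take => [W_def|//].
have : upper W by rewrite -mem_uppers (mem_take W_in).
case/and3P => _ _ mW.
have VW : V \subset W.
  apply/subsetP => x xV; have [-> // | x_m] := eqVneq x m.
  by apply: (subsetP VmW); rewrite in_setD1 x_m.
have V_eq : V = W.
  by apply/eqP; rewrite eqEcard VW -W_def card_uppers_mono // ltnW.
move: W_def; rewrite -V_eq /V => /eqP; rewrite nth_uniq ?sort_uniq ?enum_uniq //.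
  by move/eqP => i_j; move: i_lt; rewrite i_j ltnn.
exact: ltn_trans j_lt.
Qed.

Lemma extendable_stage j : j < size uppers -> extendable (stage j) (stage j.+1).
Proof.
move=> j_lt; have /and3P [G1V G0V mV] := upper_nth j_lt.
set V := nth set0 uppers j in G1V G0V mV *.
apply: (@eq_extendable _ (fun U => stage j U || (U \subset V))).
  move=> U; rewrite /stage (take_nth set0 j_lt) has_rcons -/V.
  by case: (G0 U); case: (U \subset V); case: has.
apply: (extendable_horn (w := m)) => //.
- exact: stage_down_closed.
- exact: G1_chain.
- rewrite (cardsD1 m V) mV add1n ltnS lt0n cards_eq0.
  by apply: contra (G0_delm G1V G0V mV) => /eqP ->.
- by move=> v; apply: stage_faces.
- exact: stage_missing.
Qed.

Lemma extendable_matching : extendable G0 G1.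
Proof.
have ext_stage j : j <= size uppers -> extendable G0 (stage j).
  elim: j => [_ | j IH j_lt].
    by apply: (eq_extendable _ (@extendable_refl G0)) => U; rewrite /stage take0 orbF.
  apply: extendable_trans (IH (ltnW j_lt)) (extendable_stage j_lt).
  by move=> U G0U; rewrite /stage G0U.
apply: (eq_extendable _ (ext_stage _ (leqnn _))) => U; rewrite /stage take_size.
apply/idP/idP => [/orP [/G01 // | /hasP [V V_in UV]] | G1U].
  by apply: G1_down UV _; move: V_in; rewrite mem_uppers => /and3P [].
case G0U: (G0 U) => //=; apply/hasP.
case mU: (m \in U); first by exists U; rewrite ?mem_uppers /upper ?G1U ?G0U ?mU.
exists (m |: U); last exact: subsetUr.
rewrite mem_uppers /upper G1_addm ?G0U ?mU // setU11 andbT /=.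
by apply: contraFN G0U => /(G0_down (subsetUr [set m] U)).
Qed.

End Matching.

Section Cone.
Variable top : B.
Hypothesis le_top : forall b, le b top.

Lemma extendable_cone1 p : p != top ->
  extendable (order_complex le [set p]) (order_complex le (top |: [set p])).
Proof.
move=> p_top; apply: (extendable_matching (m := p)).
- exact: order_complex_down_closed.
- exact: order_complex_down_closed.
- exact: order_complexS (subsetUr _ _).
- exact: order_complex0.
- by move=> U /andP [].
- move=> U /andP [U_chain U_sub] _ pU.
  rewrite /order_complex subUset sub1set !inE eqxx orbT U_sub !andbT.
  apply: chainbU1 U_chain _ (le_refl p) => y yU; move/subsetP: U_sub => /(_ y yU).
  rewrite !inE => /orP [/eqP -> | /eqP y_p]; first by rewrite le_top.
  by move: pU; rewrite -y_p yU.
- move=> U /andP [U_chain U_sub] U_p pU; apply: contra U_p => /andP [_ Up_sub].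
  by rewrite /order_complex U_chain; move: Up_sub; rewrite subDset setUid.
Qed.

Lemma beaten_comparable (S U : {set B}) x m : beaten le S x m -> chainb le U -> x \in U ->
  U \subset top |: (x |: S) -> forall y, y \in U -> le m y || le y m.
Proof.
move=> x_beaten /chainbP U_chain xU /subsetP U_sub y yU.
move: (U_sub y yU); rewrite !in_setU1 => /or3P [/eqP -> | /eqP -> | yS].
- by rewrite le_top.
- by case/orP: x_beaten => /andP [-> _]; rewrite ?orbT.
case/orP: x_beaten => /andP [mx /forall_inP x_max]; move: (U_chain y x yU xU).
  by case/orP => [/(implyP (x_max y yS)) -> | xy]; rewrite ?(le_trans mx xy) ?orbT.
by case/orP => [yx | /(implyP (x_max y yS)) ->]; rewrite ?(le_trans yx mx) ?orbT.
Qed.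

Lemma extendable_cone_step (S : {set B}) x m :
  x \notin S -> x != top -> m \in S -> beaten le S x m ->
  extendable (predU (order_complex le (x |: S)) (order_complex le (top |: S)))
             (order_complex le (top |: (x |: S))).
Proof.
move=> xS x_top mS x_beaten; apply: (extendable_matching (m := m)).
- by move=> U V UV /orP [] /(order_complex_down_closed UV) /= ->; rewrite ?orbT.
- exact: order_complex_down_closed.
- move=> U /orP []; apply: order_complexS; first exact: subsetUr.
  exact/setUS/subsetUr.
- by rewrite /= order_complex0.
- by move=> U /andP [].
- move=> U /andP [U_chain U_sub]; rewrite negb_or /order_complex U_chain /=.
  move=> /andP [U_xS U_topS] mU; have xU : x \in U.
    case/subsetPn: U_topS => y yU; rewrite in_setU1 negb_or => /andP [/negPf y_top /negPf yS].
    by move/subsetP: U_sub => /(_ y yU); rewrite !in_setU1 y_top yS orbF => /eqP <-.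
  rewrite subUset sub1set !in_setU1 mS !orbT U_sub !andbT.
  exact: chainbU1 U_chain (beaten_comparable x_beaten U_chain xU U_sub) (le_refl m).
- move=> U /andP [U_chain _]; rewrite negb_or /order_complex U_chain /=.
  move=> /andP [U_xS U_topS] mU.
  have subD1E (X : {set B}) : m \in X -> (U :\ m \subset X) = (U \subset X).
    by move=> mX; rewrite subDset (setUidPr _) // sub1set.
  by rewrite !subD1E ?in_setU1 ?mS ?orbT // (negPf U_xS) (negPf U_topS) !andbF.
Qed.

Lemma extendable_cone (S : {set B}) : dismantlable le top S ->
  extendable (order_complex le S) (order_complex le (top |: S)).
Proof.
move=> S_dism; elim: S / S_dism => [p p_top | S x m _ IH xS x_top mS x_beaten].
  exact: extendable_cone1.
move=> psi psiG.
have [psi1 psi1G agree1] := IH psi (simplicial_onS (order_complexS (subsetUr _ S)) psiG).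
have S_meet U :
    order_complex le (x |: S) U -> order_complex le (top |: S) U -> order_complex le S U.
  move=> /andP [U_chain /subsetP U_xS] /andP [_ /subsetP U_topS].
  rewrite /order_complex U_chain; apply/subsetP => y yU.
  move: (U_xS y yU) (U_topS y yU); rewrite !in_setU1.
  case/orP => [/eqP -> | //]; rewrite (negPf xS) orbF => /eqP x_eq.
  by move: x_top; rewrite x_eq eqxx.
have agreeI :
    agree_on (predI (order_complex le (x |: S)) (order_complex le (top |: S))) psi psi1.
  by move=> n s /andP [sx sT]; apply/agree1/S_meet.
have glued := simplicial_on_glue (order_complex_down_closed (X := x |: S))
  (order_complex_down_closed (X := top |: S)) psiG psi1G agreeI.
have [psi2 psi2G agree2] := extendable_cone_step xS x_top mS x_beaten glued.
by exists psi2 => // n s s_in; rewrite -agree2 /= s_in.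
Qed.

End Cone.

End MapsToKanComplex.

Section ThinCategory.
Variables (C : Defs.cat) (B : finType) (le : rel B) (top : B) (o : ob C -> B) (S : {set B}).
Hypotheses (le_refl : reflexive le) (le_trans : transitive le) (le_anti : antisymmetric le)
  (le_top : forall b, le b top).
Hypotheses (o_inj : injective o) (hom_le : forall x y, hom C x y -> le (o x) (o y))
  (le_hom : forall x y, le (o x) (o y) -> hom C x y)
  (hom_uniq : forall x y (f g : hom C x y), f = g).
Hypotheses (S_o : forall b, b \in S <-> exists x, o x = b) (S_dism : dismantlable le top S).

Lemma nsimp_ext n (x y : nsimp C n) : nob x =1 nob y -> x = y.
Proof.
case: x => ox mx m1x mMx; case: y => oy my m1y mMy /= /functional_extensionality eq_o.
subst oy; have eq_m : mx = my.
  do 3![apply: functional_extensionality_dep => ?]; exact: hom_uniq.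
by subst my; f_equal; apply: proof_irrelevance.
Qed.

Definition point_nsimp (c : ob C) : nsimp C 0.
Proof.
refine (@NSimp C 0 (fun _ => c) (fun _ _ _ => idm C c) _ _) => // *; by rewrite cmp1l.
Defined.

Definition nsimp_chain n (x : nsimp C n) : nerve_simplex le n.
Proof.
refine (exist _ [ffun i => o (nob x i)] _).
by apply/monotonebP => i j ij; rewrite !ffunE; apply/hom_le/(nmor x ij).
Defined.

Lemma nsimp_chain_inj n : injective (@nsimp_chain n).
Proof.
move=> x y /(congr1 sval) eq_xy; apply: nsimp_ext => i; apply: o_inj.
by move/ffunP: eq_xy => /(_ i); rewrite !ffunE.
Qed.

Lemma nsimp_chain_act m n (f : dmap m n) (x : nsimp C n) :
  nsimp_chain (nact f x) = simplex_act f (nsimp_chain x).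
Proof. by apply: nerve_simplex_eq => i; rewrite /= !ffunE. Qed.

Lemma nsimp_chain_in n (x : nsimp C n) : order_complex le S (vertex_set (nsimp_chain x)).
Proof.
rewrite /order_complex chainb_vertex_set; apply/subsetP => _ /imsetP [i _ ->].
by apply/S_o; exists (nob x i); rewrite /= ffunE.
Qed.

Lemma nsimp_chain_onto n (s : nerve_simplex le n) : vertex_set s \subset S ->
  exists x : nsimp C n, nsimp_chain x = s.
Proof.
move=> /subsetP sS.
have lift i : {c : ob C | o c = sval s i}.
  by apply: constructive_indefinite_description; apply/S_o/sS/imset_f.
pose ob_ i := sval (lift i).
have ob_E i : o (ob_ i) = sval s i := svalP (lift i).
have ob_mono (i j : 'I_n.+1) : i <= j -> le (o (ob_ i)) (o (ob_ j)).
  by move=> ij; rewrite !ob_E; apply: nerve_simplex_mono.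
exists (@NSimp C n ob_ (fun i j ij => le_hom (ob_mono i j ij)) (fun _ _ => hom_uniq _ _)
  (fun _ _ _ _ _ _ => hom_uniq _ _)).
by apply: nerve_simplex_eq => i; rewrite /= ffunE ob_E.
Qed.

Lemma simplicial_on_of_smap (K : sSet) (phi : smap (nerve C) K) (c0 : ob C) :
  exists2 psi : forall n, nerve_simplex le n -> sx K n,
    simplicial_on (order_complex le S) psi &
    forall n (x : nsimp C n), psi n (nsimp_chain x) = sval phi n x.
Proof.
pose psi n (s : nerve_simplex le n) :=
  match excluded_middle_informative (exists x : nsimp C n, nsimp_chain x = s) with
  | left lifts => sval phi n (sval (constructive_indefinite_description _ lifts))
  | right _ => sact K (dconst n ord0) (sval phi 0 (point_nsimp c0))
  end.
have psiE n (x : nsimp C n) : psi n (nsimp_chain x) = sval phi n x.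
  rewrite /psi; case: excluded_middle_informative => [lifts | []]; last by exists x.
  by case: constructive_indefinite_description => y /= /nsimp_chain_inj ->.
exists psi => // m n f s /andP [_ /nsimp_chain_onto [x <-]].
by rewrite -nsimp_chain_act !psiE (svalP phi).
Qed.

(* The homotopy from the nerve of C to the cone point, on the simplex (x, u) of
   N(C) x Delta^1. *)
Definition cone_simplex n (x : nsimp C n) (u : dmap n 1) : nerve_simplex le n.
Proof.
refine (exist _ [ffun i => if sval u i == ord0 then o (nob x i) else top] _).
apply/monotonebP => i j ij; rewrite !ffunE.
have [uj0 | _] := eqVneq (sval u j) ord0; last by rewrite le_top.
have ui0 : sval u i == ord0.
  by rewrite -val_eqE /= -leqn0; move: (dmap_mono u ij); rewrite uj0.
by rewrite ui0; apply/hom_le/(nmor x ij).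
Defined.

Lemma cone_simplex_act m n (a : dmap m n) (x : nsimp C n) (u : dmap n 1) :
  cone_simplex (nact a x) (dcomp u a) = simplex_act a (cone_simplex x u).
Proof. by apply: nerve_simplex_eq => i; rewrite /= !ffunE. Qed.

Lemma cone_simplex_in n (x : nsimp C n) (u : dmap n 1) :
  order_complex le (top |: S) (vertex_set (cone_simplex x u)).
Proof.
rewrite /order_complex chainb_vertex_set; apply/subsetP => _ /imsetP [i _ ->].
rewrite /= ffunE; case: eqP => _; last exact: setU11.
by apply/setU1r/S_o; exists (nob x i).
Qed.

Lemma cone_simplex0 n (x : nsimp C n) : cone_simplex x (dconst n ord0) = nsimp_chain x.
Proof. by apply: nerve_simplex_eq => i; rewrite /= !ffunE. Qed.

Definition top_simplex : nerve_simplex le 0.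
Proof. by exists [ffun _ => top]; apply/monotonebP => i j _; rewrite !ffunE. Defined.

Lemma cone_simplex1 n (x : nsimp C n) :
  cone_simplex x (dconst n ord_max) = simplex_act (dconst n ord0) top_simplex.
Proof. by apply: nerve_simplex_eq => i; rewrite /= !ffunE. Qed.

Lemma top_simplex_in : order_complex le (top |: S) (vertex_set top_simplex).
Proof.
rewrite /order_complex chainb_vertex_set sub_imset_pre.
by apply/subsetP => i _; rewrite inE ffunE setU11.
Qed.

Lemma nerve_wcontr : wcontr (nerve C).
Proof.
have [c0 _] : {c0 : ob C | True}.
  apply: constructive_indefinite_description.
  by have [b /S_o [c _]] := dismantlable_neq0 S_dism; exists c.
split=> [|K K_kan phi]; first exact: (inhabits (point_nsimp c0)).
have [psi psiS psiE] := simplicial_on_of_smap phi c0.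
have [psi' psi'S agree'] := extendable_cone le_refl le_trans le_anti K_kan le_top S_dism psiS.
exists (psi' 0 top_simplex), (fun n x u => psi' n (cone_simplex x u)); split; [|split].
- by move=> m n a x u; rewrite cone_simplex_act psi'S // cone_simplex_in.
- by move=> n x; rewrite cone_simplex0 -agree' ?psiE // nsimp_chain_in.
- by move=> n x; rewrite cone_simplex1 psi'S // top_simplex_in.
Qed.

End ThinCategory.

Definition tree_nth_ind (P : tree -> Prop)
    (IH : forall ts, (forall i, i < size ts -> P (nth (Node [::]) ts i)) -> P (Node ts)) :
    forall t, P t :=
  fix tree_ind t := let: Node ts := t in IH ts
    ((fix forest_ind ts : forall i, i < size ts -> P (nth (Node [::]) ts i) :=
        match ts with
        | [::] => fun i i_lt => False_ind _ (notF i_lt)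
        | t :: ts' => fun i =>
            match i return i < (size ts').+1 -> P (nth (Node [::]) (t :: ts') i) with
            | 0 => fun=> tree_ind t
            | i'.+1 => forest_ind ts' i'
            end
        end) ts).

Fixpoint cells (t : tree) : seq (seq nat) :=
  let: Node ts := t in
  [seq [:: j] | j <- iota 0 (size ts).+1] ++
  [seq i :: c | i <- iota 0 (size ts), c <- nth [::] (map cells ts) i].

Lemma cellsE ts : cells (Node ts) =
  [seq [:: j] | j <- iota 0 (size ts).+1] ++
  [seq i :: c | i <- iota 0 (size ts), c <- nth [::] (map cells ts) i].
Proof. by []. Qed.

Lemma mem_cells t c : is_cell c t -> c \in cells t.
Proof.
elim/tree_nth_ind: t c => ts IH [//|i [|j c]] c_cell; rewrite cellsE mem_cat.
  by rewrite map_f // mem_iota.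
case/andP: c_cell => i_lt c_cell; apply/orP; right.
by apply: allpairs_f_dep; rewrite ?mem_iota // (nth_map (Node [::])) // IH.
Qed.

Lemma is_cell_neq0 c t : is_cell c t -> c != [::].
Proof. by case: c. Qed.

Lemma is_cell_cons i c ts : c != [::] ->
  is_cell (i :: c) (Node ts) = (i < size ts) && is_cell c (nth (Node [::]) ts i).
Proof. by case: c. Qed.

Lemma is_cell_vertex0 t : is_cell [:: 0] t.
Proof. by case: t. Qed.

Lemma is_cell_susp_inv T c : is_cell c (susp T) ->
  (exists2 j, c = [:: j] & j <= 1) \/ (exists2 c0, c = 0 :: c0 & is_cell c0 T).
Proof.
case: c => [//|i [|j c]] c_cell; first by left; exists i.
right; move: c_cell; rewrite is_cell_cons // => /andP [].
by case: i => // _ c_cell; exists (j :: c).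
Qed.

Definition cell_le (c d : seq nat) : bool := [|| c == d, valid GSrc c d | valid GTgt c d].

Lemma cell_leP c d : reflect (exists g, valid g c d) (cell_le c d).
Proof.
apply: (iffP or3P) => [[v | v | v] | [[] v]].
- by exists GId.
- by exists GSrc.
- by exists GTgt.
- exact: Or31.
- exact: Or32.
- exact: Or33.
Qed.

Lemma cell_le_refl : reflexive cell_le.
Proof. by move=> c; rewrite /cell_le eqxx. Qed.

Lemma cell_le_trans : transitive cell_le.
Proof.
move=> b a c /cell_leP [f vf] /cell_leP [g vg]; apply/cell_leP.
by exists (glab_cmp g f); apply: valid_cmp vf vg.
Qed.

Lemma size_valid g c d : valid g c d -> size c <= size d /\ (size c = size d -> g = GId).
Proof.
case: g => /=; first by move/eqP ->.
all: by case/andP => lt _; split; [exact: ltnW | move=> e; move: lt; rewrite e ltnn].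
Qed.

Lemma cell_le_anti : antisymmetric cell_le.
Proof.
move=> c d /andP [/cell_leP [f vf] /cell_leP [g vg]].
have [cd f_id] := size_valid vf; have [dc _] := size_valid vg.
have size_cd : size c = size d by apply/anti_leq; rewrite cd.
by move: vf; rewrite (f_id size_cd) => /eqP.
Qed.

Lemma valid_uniq g g' c d : valid g c d -> valid g' c d -> g = g'.
Proof.
have src_tgt m (x : seq nat) : bnd false m x != bnd true m x.
  by apply/eqP => /(congr1 (last 0)); rewrite !last_rcons addn0 addn1 => /n_Sn.
case: g; case: g' => //=.
all: first [ move=> /eqP e /andP [lt _]; by move: lt; rewrite e ltnn
           | move=> /andP [lt _] /eqP e; by move: lt; rewrite e ltnn
           | move=> /andP [_ /eqP e1] /andP [_ /eqP e2];
             by move: (src_tgt (size c).-1 d); rewrite -?e1 -?e2 eqxx ].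
Qed.

Lemma cell_le_vertex j j' : cell_le [:: j] [:: j'] = (j == j').
Proof. by rewrite /cell_le /= orbF eqseq_cons andbT. Qed.

Lemma cell_le_vertex_cons j i d : d != [::] ->
  cell_le [:: j] (i :: d) = (j == i) || (j == i.+1).
Proof.
by case: d => // y d _; rewrite /cell_le /= /bnd /= addn0 addn1 !eqseq_cons !andbT andbF.
Qed.

Lemma cell_le_cons_vertex i c j : c != [::] -> cell_le (i :: c) [:: j] = false.
Proof. by case: c => // y c _; rewrite /cell_le /= orbF eqseq_cons /= andbF. Qed.

Lemma cell_le_cons i c i' d : c != [::] -> d != [::] ->
  cell_le (i :: c) (i' :: d) = (i == i') && cell_le c d.
Proof.
case: c => // y c _ dn; rewrite /cell_le /= ltnS.
have bnd_cons b k : bnd b k.+1 (i' :: d) = i' :: bnd b k d by [].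
by rewrite !bnd_cons !eqseq_cons; case: (i == i'); rewrite /= ?andbF.
Qed.

Section CellRank.
Import Order.TTheory.

Lemma ltxi_cons_nat x s y t :
  (x :: s < y :: t :> seqlexi nat)%O = (x < y) || (x == y) && (s < t :> seqlexi nat)%O.
Proof. by rewrite ltxi_cons !leEnat; case: ltngtP. Qed.

Lemma ltxi_pair_nat a b a' b' :
  ([:: a; b] < [:: a'; b'] :> seqlexi nat)%O = (a < a') || (a == a') && (b < b').
Proof. by rewrite !ltxi_cons_nat ltxx andbF orbF. Qed.

(* The face poset of a tree is built up by adding beat points in the order of
   [cell_rank]: first the vertices and the bottom edges of the root alternately,
   [:: 0], [:: 0; 0], [:: 1], [:: 1; 0], ..., then the remaining cells of each child in
   turn, recursively.  Each cell other than [:: 0] is dominated among the earlier cells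
   by its [partner]: a vertex by the edge ending at it, a bottom edge by its source, and
   a deeper cell as inside its child. *)
Fixpoint cell_rank (c : seq nat) : seqlexi nat :=
  match c with
  | [::] => [::]
  | [:: j] => [:: 0; j.*2]
  | i :: c' => if c' == [:: 0] then [:: 0; i.*2.+1] else 1 :: i :: cell_rank c'
  end.

Fixpoint partner (c : seq nat) : seq nat :=
  match c with
  | [::] => [::]
  | [:: j] => [:: j.-1; 0]
  | i :: c' => if c' == [:: 0] then [:: i] else i :: partner c'
  end.

Lemma cell_rank_cons i c : c != [::] -> cell_rank (i :: c) =
  if c == [:: 0] then [:: 0; i.*2.+1] else 1 :: i :: cell_rank c.
Proof. by case: c. Qed.

Lemma partner_cons i c : c != [::] -> partner (i :: c) =
  if c == [:: 0] then [:: i] else i :: partner c.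
Proof. by case: c. Qed.

Lemma cell_rank_inj c d : c != [::] -> d != [::] -> cell_rank c = cell_rank d -> c = d.
Proof.
elim: c d => [//|i c IH] [//|i' d] _ _.
have [-> | cn] := eqVneq c [::]; have [-> | dn] := eqVneq d [::].
- by case=> /(congr1 half); rewrite !doubleK => ->.
- rewrite (cell_rank_cons i' dn); case: ifP => _ // [] e.
  by have := congr1 odd e; rewrite odd_double /= odd_double.
- rewrite (cell_rank_cons i cn); case: ifP => _ // [] e.
  by have := congr1 odd e; rewrite odd_double /= odd_double.
rewrite !cell_rank_cons //.
case: ifP => [/eqP -> | _]; case: ifP => [/eqP -> | _] //.
  by case=> /(congr1 half); rewrite !doubleK => ->.
by case=> -> /(IH _ cn dn) ->.
Qed.

Lemma cell_rank_vertex0_lt c : c != [::] -> c != [:: 0] ->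
  (cell_rank [:: 0] < cell_rank c)%O.
Proof.
case: c => // i [|y c] _ /=.
  by rewrite eqseq_cons andbT => i0; rewrite ltxi_pair_nat /= double_gt0 lt0n i0.
by case: ifP => _; rewrite ltxi_cons_nat.
Qed.

Lemma cell_rank_cons_lt i y c : y != [::] -> c != [::] -> c != [:: 0] ->
  (cell_rank (i :: y) < 1 :: i :: cell_rank c)%O -> (cell_rank y < cell_rank c)%O.
Proof.
move=> yn cn c0; rewrite cell_rank_cons //; case: ifP => [/eqP -> _ | _].
  exact: cell_rank_vertex0_lt.
by rewrite !ltxi_cons_nat !ltnn !eqxx.
Qed.

Definition down_beaten t c m : Prop := cell_le m c /\
  forall y, is_cell y t -> (cell_rank y < cell_rank c)%O -> cell_le y c -> cell_le y m.

Definition up_beaten t c m : Prop := cell_le c m /\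
  forall y, is_cell y t -> (cell_rank y < cell_rank c)%O -> cell_le c y -> cell_le m y.

Definition beaten_by_partner t c : Prop :=
  [/\ is_cell (partner c) t, (cell_rank (partner c) < cell_rank c)%O &
      down_beaten t c (partner c) \/ up_beaten t c (partner c)].

Lemma partner_vertex ts j : 0 < j <= size ts -> beaten_by_partner (Node ts) [:: j].
Proof.
case: j => [//|k] /= k_lt; split.
- by rewrite is_cell_cons // is_cell_vertex0 andbT.
- by rewrite ltxi_pair_nat /= doubleS ltnSn.
right; split; first by rewrite cell_le_vertex_cons // eqxx orbT.
case=> [//|i [|z y]] y_cell.
  by rewrite cell_le_vertex => y_lt /eqP i_k; move: y_lt; rewrite i_k ltxx.
rewrite cell_rank_cons //; case: ifP => [/eqP -> | _]; last by rewrite ltxi_cons_nat.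
rewrite ltxi_pair_nat /= doubleS !ltnS leq_double.
rewrite cell_le_vertex_cons // => i_le /orP [/eqP i_eq | /eqP [->]]; last exact: cell_le_refl.
by move: i_le; rewrite -i_eq ltnn.
Qed.

Lemma partner_edge ts i : i < size ts -> beaten_by_partner (Node ts) [:: i; 0].
Proof.
move=> i_lt; split.
- exact: ltnW.
- by rewrite ltxi_pair_nat /= ltnSn.
left; split; first by rewrite cell_le_vertex_cons // eqxx.
case=> [//|j [|z [|u y]]] y_cell.
- rewrite cell_le_vertex_cons // => y_lt /orP [/eqP -> | /eqP j_i]; first exact: cell_le_refl.
  by move: y_lt; rewrite j_i ltxi_pair_nat /= doubleS ltnNge leqnSn.
- rewrite cell_le_cons // cell_le_vertex => y_lt /andP [/eqP j_i /eqP z0].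
  by move: y_lt; rewrite j_i z0 ltxx.
- by rewrite cell_le_cons // cell_le_cons_vertex // andbF.
Qed.

Lemma partner_child ts i c : i < size ts -> c != [::] -> c != [:: 0] ->
  beaten_by_partner (nth (Node [::]) ts i) c -> beaten_by_partner (Node ts) (i :: c).
Proof.
move=> i_lt cn c0 [pc_cell pc_lt pc_beaten]; have pcn := is_cell_neq0 pc_cell.
rewrite /beaten_by_partner partner_cons // cell_rank_cons // (negPf c0); split.
- by rewrite is_cell_cons // i_lt.
- rewrite cell_rank_cons //; case: ifP => _; first by rewrite ltxi_cons_nat.
  by rewrite !ltxi_cons_nat !ltnn !eqxx pc_lt.
case: pc_beaten => [[pc_le pc_max] | [pc_ge pc_min]]; [left | right];
  split; rewrite ?cell_le_cons ?eqxx //.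
- case=> [//|j [|z y]] y_cell y_lt; first by rewrite !cell_le_vertex_cons.
  rewrite !cell_le_cons // => /andP [/eqP j_i y_le]; rewrite j_i eqxx /=.
  move: y_cell y_lt; rewrite is_cell_cons // j_i (cell_rank_cons i cn) (negPf c0).
  move=> /andP [_ y_cell] y_lt.
  exact: pc_max y_cell (cell_rank_cons_lt _ cn c0 y_lt) y_le.
- case=> [//|j [|z y]] y_cell y_lt; first by rewrite !cell_le_cons_vertex.
  rewrite !cell_le_cons // => /andP [/eqP i_j y_ge]; rewrite i_j eqxx /=.
  move: y_cell y_lt; rewrite is_cell_cons // -i_j (cell_rank_cons i cn) (negPf c0).
  move=> /andP [_ y_cell] y_lt.
  exact: pc_min y_cell (cell_rank_cons_lt _ cn c0 y_lt) y_ge.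
Qed.

Lemma partnerP t c : is_cell c t -> c != [:: 0] -> beaten_by_partner t c.
Proof.
elim/tree_nth_ind: t c => ts IH [//|i c] c_cell c0.
have [c_nil | cn] := eqVneq c [::].
  subst c; apply/partner_vertex/andP; split; last exact: c_cell.
  by rewrite lt0n; apply: contraNneq c0 => ->.
move: c_cell; rewrite is_cell_cons // => /andP [i_lt c_cell].
have [-> | c_0] := eqVneq c [:: 0]; first exact: partner_edge.
by apply: partner_child => //; apply: IH.
Qed.

End CellRank.

Lemma el_hom_uniq T (x y : el_ob T) (f g : el_hom x y) : f = g.
Proof. by apply: sig_eq; apply: valid_uniq (svalP f) (svalP g). Qed.

Lemma el_hom_cell_le T (x y : el_ob T) : el_hom x y -> cell_le (sval x) (sval y).
Proof. by move=> f; apply/cell_leP; exists (sval f); exact: (svalP f). Qed.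

Definition el_hom_of_cell_le T (x y : el_ob T) (xy : cell_le (sval x) (sval y)) : el_hom x y.
Proof.
exists (if sval x == sval y then GId else if valid GSrc (sval x) (sval y) then GSrc else GTgt).
by move: xy; rewrite /cell_le; case: eqP => [-> _ | _] /=; [exact: eqxx | case: ifP].
Defined.

Section CommaCategory.
Variable T : tree.

Definition tcell := seq_sub (cells T).

(* The face poset of T with the cone point [None] adjoined on top. *)
Definition tcell_le (a b : option tcell) : bool :=
  match a, b with
  | _, None => true
  | None, Some _ => false
  | Some x, Some y => cell_le (ssval x) (ssval y)
  end.

Lemma tcell_le_refl : reflexive tcell_le.
Proof. by case=> // x; apply: cell_le_refl. Qed.

Lemma tcell_le_trans : transitive tcell_le.
Proof. by case=> [b|] [a|] [c|] //=; apply: cell_le_trans. Qed.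

Lemma tcell_le_anti : antisymmetric tcell_le.
Proof. by case=> [a|] [b|] //= ab; congr Some; apply/val_inj/cell_le_anti. Qed.

Lemma tcell_le_top b : tcell_le b None.
Proof. by case: b. Qed.

Definition cells_above (e : seq nat) : {set option tcell} :=
  [set b | if b is Some y then is_cell (ssval y) T && cell_le e (0 :: ssval y) else false].

Lemma dismantlable_cells_above_vertex j : j <= 1 ->
  dismantlable tcell_le None (cells_above [:: j]).
Proof.
move=> j_le; have above_all y : (Some y \in cells_above [:: j]) = is_cell (ssval y) T.
  rewrite inE; case y_cell: is_cell => //=.
  by rewrite cell_le_vertex_cons ?(is_cell_neq0 y_cell) //; case: j j_le => [|[|]].
pose rank (b : option tcell) : seqlexi nat := if b is Some y then cell_rank (ssval y) else [::].
pose p (b : option tcell) := if b is Some y then Some (insubd y (partner (ssval y))) else None.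
pose v0 := Some (SeqSub (mem_cells (is_cell_vertex0 T))).
apply: (dismantlable_rank (rank := rank) (p := p) (x0 := v0)).
- by rewrite above_all is_cell_vertex0.
- by rewrite inE.
- move=> [a|] [b|]; rewrite ?above_all ?inE // => a_cell b_cell /= ab.
  by congr Some; apply/val_inj/(cell_rank_inj (is_cell_neq0 a_cell) (is_cell_neq0 b_cell)).
move=> [y|]; last by rewrite inE.
rewrite above_all => y_cell y_v0; have y0 : ssval y != [:: 0].
  by apply: contra y_v0 => /eqP y0; apply/eqP; congr Some; apply: val_inj.
have [py_cell py_lt py_beaten] := partnerP y_cell y0.
have pyE : ssval (insubd y (partner (ssval y))) = partner (ssval y).
  exact: insubdK (mem_cells py_cell).
split; rewrite /p /rank ?above_all ?pyE //.
case: py_beaten => [[py_le py_max] | [py_ge py_min]]; apply/orP; [left | right];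
  rewrite /= pyE ?py_le ?py_ge; apply/forall_inP => -[z|]; rewrite !inE //;
  move=> /andP [/andP [z_cell _] z_lt]; apply/implyP.
- by rewrite /= ?pyE; apply: py_max.
- by rewrite /= ?pyE; apply: py_min.
Qed.

Lemma dismantlable_cells_above_cell c0 : is_cell c0 T ->
  dismantlable tcell_le None (cells_above (0 :: c0)).
Proof.
move=> c0_cell; have c0n := is_cell_neq0 c0_cell.
apply: (dismantlable_bottom tcell_le_refl tcell_le_trans tcell_le_anti
  (b := Some (SeqSub (mem_cells c0_cell)))).
- by rewrite inE /= c0_cell cell_le_refl.
- by rewrite inE.
move=> [y|] //; rewrite inE => /andP [y_cell].
by rewrite cell_le_cons ?eqxx ?(is_cell_neq0 y_cell).
Qed.

Lemma dismantlable_cells_above e : is_cell e (susp T) ->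
  dismantlable tcell_le None (cells_above e).
Proof.
case/is_cell_susp_inv => [[j -> j_le] | [c0 -> c0_cell]].
- exact: dismantlable_cells_above_vertex.
- exact: dismantlable_cells_above_cell.
Qed.

Variable d : ob (theta_el (susp T)).
Let C := comma (xi_el T) d.

Definition comma_cell (X : ob C) : option tcell := Some (SeqSub (mem_cells (svalP (projT1 X)))).

Lemma comma_cell_inj : injective comma_cell.
Proof.
move=> [c f] [c' f'] [] /sig_eq c_eq; subst c'.
by congr existT; apply: el_hom_uniq.
Qed.

Lemma comma_hom_uniq (X Y : ob C) (f g : hom C X Y) : f = g.
Proof. by apply: sig_eq; apply: el_hom_uniq. Qed.

Lemma tcell_le_comma_hom (X Y : ob C) : hom C X Y -> tcell_le (comma_cell X) (comma_cell Y).
Proof. by move=> f; apply: el_hom_cell_le (sval f). Qed.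

Definition comma_hom_of_tcell_le (X Y : ob C) (XY : tcell_le (comma_cell X) (comma_cell Y)) :
  hom C X Y := exist _ (el_hom_of_cell_le XY) (el_hom_uniq _ _).

Lemma cells_above_comma b : b \in cells_above (sval d) <-> exists X, comma_cell X = b.
Proof.
split=> [|[[c f] <-]].
  case: b => [y|]; rewrite inE // => /andP [y_cell dy].
  pose c : el_ob T := exist _ (ssval y) y_cell.
  by exists (existT _ c (el_hom_of_cell_le (y := xi_fo c) dy)); congr Some; apply: val_inj.
by rewrite inE; apply/andP; split; [apply: (svalP c) | apply: el_hom_cell_le f].
Qed.

Lemma comma_wcontr : wcontr (nerve C).
Proof.
apply: (nerve_wcontr tcell_le_refl tcell_le_trans tcell_le_anti tcell_le_top
  comma_cell_inj tcell_le_comma_hom comma_hom_of_tcell_le comma_hom_uniq cells_above_comma).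
exact: dismantlable_cells_above (svalP d).
Qed.

End CommaCategory.

Theorem mainTheorem5 (T : tree) : final (xi_el T).
Proof. by move=> d; apply: comma_wcontr. Qed.
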